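(* In the situation of Theorem 3.2 (finite-dimensional two-step solvable $\mathfrak g=\mathfrak g^\infty\rtimes\mathfrak n$ over a field of characteristic zero, an LR-structure $\cdot$ on $\mathfrak n$ with $\mathfrak n\cdot\mathfrak n\subseteq[\mathfrak n,\mathfrak n]$), one has $\mathfrak n^i\cdot\mathfrak n^j\subseteq\mathfrak n^{i+j}$ for all $i,j\ge1$, and the LR-structure $(a,x)\star(b,y)=([x,b],x\cdot y)$ on $\mathfrak g$ ($a,b\in\mathfrak g^\infty$, $x,y\in\mathfrak n$) is complete.
   Context: Lower central series: $\mathfrak n^1=\mathfrak n$, $\mathfrak n^{i+1}=[\mathfrak n,\mathfrak n^i]$; $\mathfrak g^\infty=\bigcap_i\mathfrak g^i$. An LR-structure on a Lie algebra is a bilinear product $\cdot$ on its underlying space with $x\cdot(y\cdot z)=y\cdot(x\cdot z)$, $(x\cdot y)\cdot z=(x\cdot z)\cdot y$ and $x\cdot y-y\cdot x=[x,y]$; it is complete if all right multiplications $y\mapsto y\cdot x$ are nilpotent. $\mathfrak n$ is a subalgebra complementary to the abelian ideal $\mathfrak g^\infty$. *)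

From HB Require Import structures.
From mathcomp Require Import all_boot all_order all_algebra.
Set Implicit Arguments. Unset Strict Implicit. Unset Printing Implicit Defensive.
Import GRing.Theory.
Local Open Scope ring_scope.

Section LieDefs.
Variables (K : fieldType) (V : vectType K).

Definition lie_bracket (br : V -> V -> V) : Prop :=
  [/\ forall a x y z, br (a *: x + y) z = a *: br x z + br y z,
      forall a x y z, br z (a *: x + y) = a *: br z x + br z y,
      forall x, br x x = 0
    & forall x y z, br x (br y z) + br y (br z x) + br z (br x y) = 0].

(* [U, W] : the subspace spanned by all brackets [u, w], u in U, w in W
   (by bilinearity it is spanned by brackets of basis vectors). *)
Definition brk (br : V -> V -> V) (U W : {vspace V}) : {vspace V} :=
  (<<[seq br u w | u <- (vbasis U : seq V), w <- (vbasis W : seq V)]>>)%VS.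

Fixpoint lcs0 (br : V -> V -> V) (N : {vspace V}) (k : nat) : {vspace V} :=
  if k is k'.+1 then brk br N (lcs0 br N k') else N.

(* lower central series, indexed from 1:  lcs N 1 = N, lcs N (i+1) = [N, lcs N i] *)
Definition lcs (br : V -> V -> V) (N : {vspace V}) (i : nat) : {vspace V} :=
  lcs0 br N i.-1.

(* p is an LR-structure on the subalgebra N (p is only relevant on N) *)
Definition LR_on (br : V -> V -> V) (N : {vspace V}) (p : V -> V -> V) : Prop :=
  (forall x y, x \in N -> y \in N -> p x y \in N) /\
  [/\ forall a x y z, x \in N -> y \in N -> z \in N ->
        p (a *: x + y) z = a *: p x z + p y z,
      forall a x y z, x \in N -> y \in N -> z \in N ->
        p z (a *: x + y) = a *: p z x + p z y,
      forall x y z, x \in N -> y \in N -> z \in N -> p x (p y z) = p y (p x z),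
      forall x y z, x \in N -> y \in N -> z \in N -> p (p x y) z = p (p x z) y
    & forall x y, x \in N -> y \in N -> p x y - p y x = br x y].

Definition complete_product (m : V -> V -> V) : Prop :=
  forall v : V, exists k : nat, forall u : V, iter k (fun w => m w v) u = 0.

End LieDefs.

From HB Require Import structures.
From mathcomp Require Import all_boot all_order all_algebra.
Set Implicit Arguments. Unset Strict Implicit. Unset Printing Implicit Defensive.
Import GRing.Theory.
Local Open Scope ring_scope.

(* Write N^k for the lower central series of N (N^1 = N); internally we use
   the 0-based series lcs0 N k = N^(k+1).  Everything rests on one induction
   principle: a map that is linear on a subspace and sends every generating
   bracket [u, w] (u in U, w in W) into T sends the whole space [U, W] into T.
   1. Lie algebra facts: [N^a, N^b] <= N^(a+b) (Jacobi identity), and the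
      lower central series decreases and, by dimension, stabilises.
   2. LR facts: left multiplications are derivations of the bracket, and
      [y,z].x = [y.x, z] + [y, z.x].  With N.N <= N^2 these give, by induction
      along the generators, N^i . N^j <= N^(i+j): the first claim.
   3. N is nilpotent: the series of g stabilises at g^infty, so N^c lies in
      g^infty /\ N = 0 for c large.  Moreover g^infty is an ideal.
   4. Completeness: right multiplication by b + y maps a + x to
      [x, b] + x.y, so the N-component of its k-th iterate lies in N^k;
      after c + 2 steps the iterate vanishes. *)

Section Linear.
Variables (K : fieldType) (V : vectType K).

Definition linear_on (U : {vspace V}) (f : V -> V) : Prop :=
  forall a x y, x \in U -> y \in U -> f (a *: x + y) = a *: f x + f y.

Lemma linear_on0 U f : linear_on U f -> f 0 = 0.
Proof.
move=> lin; have := lin 1 0 0 (mem0v U) (mem0v U).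
by rewrite !scale1r addr0 => H; apply: (addrI (f 0)); rewrite addr0 -H.
Qed.

Lemma linear_onB U f x y :
  linear_on U f -> x \in U -> y \in U -> f (x - y) = f x - f y.
Proof.
by move=> lin xU yU; rewrite addrC -scaleN1r lin ?scaleN1r 1?addrC.
Qed.

Lemma linear_on_span (U W : {vspace V}) f (X : seq V) :
  linear_on U f -> {subset X <= U} -> (forall x, x \in X -> f x \in W) ->
  forall v, v \in <<X>>%VS -> f v \in W.
Proof.
move=> lin XU XW v /(@coord_span _ _ _ (in_tuple X)) ->.
pose P s := s \in U /\ f s \in W.
suff : P (\sum_i coord (in_tuple X) i v *: (in_tuple X)`_i) by case.
apply: big_rec => [|i s _ [sU fsW]]; first by rewrite /P (linear_on0 lin) !mem0v.
have Xi : (in_tuple X)`_i \in U by apply/XU/mem_nth.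
rewrite /P lin //; split; first by rewrite memvD ?memvZ.
by rewrite memvD ?memvZ // XW ?mem_nth.
Qed.

End Linear.

Section Bracket.
Variables (K : fieldType) (V : vectType K) (br : V -> V -> V).
Hypothesis Hbr : lie_bracket br.

Lemma br_linear_l z : linear_on fullv (fun x => br x z).
Proof. by case: Hbr => L1 _ _ _ a x y _ _; rewrite L1. Qed.

Lemma br_linear_r z : linear_on fullv (br z).
Proof. by case: Hbr => _ L2 _ _ a x y _ _; rewrite L2. Qed.

Lemma br0l z : br 0 z = 0.
Proof. exact: linear_on0 (br_linear_l z). Qed.

Lemma brN x y : br x y = - br y x.
Proof.
case: Hbr => L1 L2 L3 _.
have D u v w : br (u + v) w = br u w + br v w.
  by rewrite -[u]scale1r L1 !scale1r.
have E u v w : br w (u + v) = br w u + br w v.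
  by rewrite -[u]scale1r L2 !scale1r.
have := L3 (x + y); rewrite D !E !L3 add0r addr0 => /eqP.
by rewrite addr_eq0 => /eqP.
Qed.

(* The Jacobi identity, read as: right bracketing by y is a derivation. *)
Lemma jacobi_r u z y : br (br u z) y = br u (br z y) + br z (br y u).
Proof.
case: Hbr => _ _ _ L4; have /eqP := L4 y u z.
by rewrite -addrA addr_eq0 => /eqP E; rewrite brN E opprK.
Qed.

Lemma brk_gen (U W : {vspace V}) z :
  z \in [seq br u w | u <- (vbasis U : seq V), w <- (vbasis W : seq V)] ->
  exists u w, [/\ u \in U, w \in W & z = br u w].
Proof.
by case/allpairsP=> [[u w] [/= /vbasis_mem uU /vbasis_mem wW ->]]; exists u, w.
Qed.

Lemma brk_ind (U W U0 T : {vspace V}) (f : V -> V) :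
  linear_on U0 f ->
  (forall x y, x \in U -> y \in W -> br x y \in U0 /\ f (br x y) \in T) ->
  forall v, v \in brk br U W -> f v \in T.
Proof.
move=> lin H; apply: (linear_on_span lin) => z /brk_gen [u [w [uU wW ->]]];
  by case: (H u w uU wW).
Qed.

Lemma brk_sub (U W T : {vspace V}) :
  (forall x y, x \in U -> y \in W -> br x y \in T) -> (brk br U W <= T)%VS.
Proof. by move=> H; apply/span_subvP => z /brk_gen [u [w [uU wW ->]]]; apply: H. Qed.

Lemma brk_mem (U W : {vspace V}) x y : x \in U -> y \in W -> br x y \in brk br U W.
Proof.
move=> xU yW; rewrite -(span_basis (vbasisP U)) in xU.
rewrite -(span_basis (vbasisP W)) in yW.
apply: (linear_on_span (br_linear_l y) _ _ xU) => [z _|e eU]; first exact: memvf.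
apply: (linear_on_span (br_linear_r e) _ _ yW) => [z _|f fW]; first exact: memvf.
by apply/memv_span/allpairs_f.
Qed.

Definition subalgebra (M : {vspace V}) : Prop :=
  forall x y, x \in M -> y \in M -> br x y \in M.

Lemma subalgebra_full : subalgebra fullv.
Proof. by move=> x y _ _; apply: memvf. Qed.

Lemma lcs0_sub M k : subalgebra M -> (lcs0 br M k <= M)%VS.
Proof.
move=> HM; elim: k => [|k IH] /=; first exact: subvv.
by apply: brk_sub => x y xM yk; apply: HM => //; apply: (subvP IH).
Qed.

Lemma lcs0_succ M k : subalgebra M -> (lcs0 br M k.+1 <= lcs0 br M k)%VS.
Proof.
move=> HM; elim: k => [|k IH]; first exact: lcs0_sub.
by apply: brk_sub => x y xM yk; apply/brk_mem/(subvP IH).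
Qed.

Lemma lcs0_mono M k m :
  subalgebra M -> (k <= m)%N -> (lcs0 br M m <= lcs0 br M k)%VS.
Proof.
move=> HM /subnKC <-; elim: (m - k)%N => [|d IH]; first by rewrite addn0 subvv.
by rewrite addnS; apply: subv_trans IH; apply: lcs0_succ.
Qed.

Lemma lcs0_full M k : (lcs0 br M k <= lcs0 br fullv k)%VS.
Proof.
elim: k => [|k IH] /=; first exact: subvf.
by apply: brk_sub => x y _ yk; apply: brk_mem (memvf x) (subvP IH y yk).
Qed.

Lemma lcs0_brk M a b x y :
  x \in lcs0 br M a -> y \in lcs0 br M b -> br x y \in lcs0 br M (a + b).+1.
Proof.
elim: a b x y => [|a IH] b x y xa yb; first by rewrite add0n; apply: brk_mem.
apply: (brk_ind (br_linear_l y) _ xa) => u z uM za; split; first exact: memvf.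
have yu : br y u \in lcs0 br M b.+1 by rewrite brN memvN brk_mem.
rewrite jacobi_r memvD //; first by apply: brk_mem => //; apply: IH.
by rewrite addSn -addnS; apply: IH.
Qed.

Lemma lcs0_stabilises M :
  subalgebra M -> exists c, forall d, lcs0 br M (c + d) = lcs0 br M c.
Proof.
move=> HM.
suff [c stab] : exists c, lcs0 br M c.+1 = lcs0 br M c.
  by exists c; elim=> [|d IH]; rewrite ?addn0 // addnS /= IH.
have drop k : (exists c, lcs0 br M c.+1 = lcs0 br M c) \/
              (\dim (lcs0 br M k) + k <= \dim M)%N.
  elim: k => [|k [E|IH]]; [by right; rewrite addn0 | by left | ].
  have [E|ne] := eqVneq (lcs0 br M k.+1) (lcs0 br M k); first by left; exists k.
  right; apply: leq_trans IH; rewrite addnS -addSn leq_add2r.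
  by rewrite (ltn_leqif (dimv_leqif_eq (lcs0_succ k HM))) ne.
by case: (drop (\dim M).+1) => //; rewrite addnS ltnNge leq_addl.
Qed.

End Bracket.

Section LRStructure.
Variables (K : fieldType) (V : vectType K) (br p : V -> V -> V) (N : {vspace V}).
Hypotheses (Hbr : lie_bracket br) (HN : subalgebra br N) (HLR : LR_on br N p).
Hypothesis HNN : forall x y, x \in N -> y \in N -> p x y \in lcs br N 2.

Lemma p_closed x y : x \in N -> y \in N -> p x y \in N.
Proof. by case: HLR => Pc _; apply: Pc. Qed.

Lemma p_linear_l z : z \in N -> linear_on N (fun x => p x z).
Proof. by case: HLR => _ [P1 _ _ _ _] zN a x y xN yN; rewrite P1. Qed.

Lemma p_linear_r z : z \in N -> linear_on N (p z).
Proof. by case: HLR => _ [_ P2 _ _ _] zN a x y xN yN; rewrite P2. Qed.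

Lemma p_derivation_l x y z : x \in N -> y \in N -> z \in N ->
  p x (br y z) = br (p x y) z + br y (p x z).
Proof.
move=> xN yN zN; case: HLR => _ [_ _ P3 P4 P5].
rewrite -(P5 y z) // -(P5 (p x y) z) ?p_closed // -(P5 y (p x z)) ?p_closed //.
rewrite (linear_onB (p_linear_r xN)) ?p_closed // P3 // (P3 x z y) // P4 //.
by rewrite [RHS]addrC [RHS]addrA subrK.
Qed.

Lemma p_derivation_r x y z : x \in N -> y \in N -> z \in N ->
  p (br y z) x = br (p y x) z + br y (p z x).
Proof.
move=> xN yN zN; case: HLR => _ [_ _ P3 P4 P5].
rewrite -(P5 y z) // -(P5 (p y x) z) ?p_closed // -(P5 y (p z x)) ?p_closed //.
rewrite (linear_onB (p_linear_l xN)) ?p_closed // P4 // (P4 z y x) // P3 //.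
by rewrite addrA subrK.
Qed.

Lemma lcs0_N x k : x \in lcs0 br N k -> x \in N.
Proof. exact/subvP/lcs0_sub. Qed.

Lemma p_lcs0_r x y j : x \in N -> y \in lcs0 br N j -> p x y \in lcs0 br N j.+1.
Proof.
move=> xN; elim: j y => [|j IH] y yj; first exact: HNN.
apply: (brk_ind (p_linear_r xN) _ yj) => u w uN wj.
have wN := lcs0_N wj; split; first exact: HN.
rewrite p_derivation_l // memvD //.
  by have := lcs0_brk Hbr (HNN xN uN) wj; rewrite add1n.
exact: (lcs0_brk Hbr (a := 0) uN (IH w wj)).
Qed.

Lemma p_lcs0 x y i j :
  x \in lcs0 br N i -> y \in lcs0 br N j -> p x y \in lcs0 br N (i + j).+1.
Proof.
move=> + yj; have yN := lcs0_N yj.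
elim: i x => [|i IH] x xi; first by rewrite add0n p_lcs0_r.
apply: (brk_ind (p_linear_l yN) _ xi) => u w uN wi.
have wN := lcs0_N wi; split; first exact: HN.
rewrite p_derivation_r // memvD //.
  have := lcs0_brk Hbr (p_lcs0_r uN yj) wi.
  by rewrite (_ : (j.+1 + i = i.+1 + j)%N) // !addSn addnC.
exact: (lcs0_brk Hbr (a := 0) uN (IH w wi)).
Qed.

Lemma p_lcs i j x y : (0 < i)%N -> (0 < j)%N ->
  x \in lcs br N i -> y \in lcs br N j -> p x y \in lcs br N (i + j).
Proof.
case: i => // i; case: j => // j _ _ xi yj.
by rewrite /lcs addSn addnS; apply: p_lcs0.
Qed.

End LRStructure.

Section Complement.
Variables (K : fieldType) (V : vectType K) (br : V -> V -> V) (Ginf N : {vspace V}).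
Hypotheses (Hbr : lie_bracket br) (HN : subalgebra br N).
Hypothesis HG : forall v, v \in Ginf <-> (forall i, (0 < i)%N -> v \in lcs br fullv i).
Hypothesis Hcap : (Ginf :&: N = 0)%VS.

Lemma Ginf_ideal x b : b \in Ginf -> br x b \in Ginf.
Proof.
move=> /HG bG; apply/HG => -[//|[|i]] _; first exact: memvf.
by apply: brk_mem (bG i.+1 _); rewrite ?memvf.
Qed.

Lemma complement_nilpotent : exists c, forall x, x \in lcs0 br N c -> x = 0.
Proof.
have [c stab] := lcs0_stabilises Hbr (@subalgebra_full _ _ br).
exists c => x xc.
have xf : x \in lcs0 br fullv c := subvP (@lcs0_full _ _ br Hbr N c) x xc.
have xG : x \in Ginf.
  apply/HG => i _; rewrite /lcs; case: (leqP i.-1 c) => [le|/ltnW lt].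
    exact: (subvP (lcs0_mono Hbr (@subalgebra_full _ _ br) le)).
  by rewrite -(subnKC lt) stab.
by apply/eqP; rewrite -memv0 -Hcap memv_cap xG (subvP (lcs0_sub c HN)).
Qed.

End Complement.

Section Completeness.
Variables (K : fieldType) (V : vectType K) (br p star : V -> V -> V).
Variables (Ginf N : {vspace V}).
Hypotheses (Hbr : lie_bracket br) (HN : subalgebra br N) (HLR : LR_on br N p).
Hypothesis HNN : forall x y, x \in N -> y \in N -> p x y \in lcs br N 2.
Hypothesis HG : forall v, v \in Ginf <-> (forall i, (0 < i)%N -> v \in lcs br fullv i).
Hypotheses (Hsum : (Ginf + N = fullv)%VS) (Hcap : (Ginf :&: N = 0)%VS).
Hypothesis Hstar : forall a b x y, a \in Ginf -> b \in Ginf -> x \in N -> y \in N ->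
  star (a + x) (b + y) = br x b + p x y.

Lemma decompose u : exists2 a, a \in Ginf & exists2 x, x \in N & u = a + x.
Proof.
have : u \in (Ginf + N)%VS by rewrite Hsum memvf.
by case/memv_addP => a aG [x xN ->]; exists a => //; exists x.
Qed.

Lemma star_iter b y u k : b \in Ginf -> y \in N ->
  exists2 a, a \in Ginf & exists2 x, x \in lcs0 br N k &
    iter k.+1 (fun w => star w (b + y)) u = a + x.
Proof.
move=> bG yN; have xbG x : br x b \in Ginf := Ginf_ideal Hbr HG x bG.
elim: k => [|k [a aG [x xk E]]].
  have [a aG [x xN ->]] := decompose u.
  exists (br x b); first exact: xbG.
  by exists (p x y); [exact: (p_closed HLR xN yN) | rewrite /= Hstar].
have xN := lcs0_N HN xk; rewrite iterS E.
exists (br x b); first exact: xbG.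
exists (p x y); last by rewrite Hstar.
by rewrite -[k.+1]addn0; apply: (p_lcs0 Hbr HN HLR HNN xk (j := 0)).
Qed.

Lemma star_complete : complete_product star.
Proof.
move=> v; have [b bG [y yN ->]] := decompose v.
have [c Hc] := complement_nilpotent Hbr HN HG Hcap.
exists c.+2 => u; have [a aG [x xc E]] := star_iter u c bG yN.
rewrite iterS E (Hc x xc) Hstar ?mem0v // br0l //.
by rewrite (linear_on0 (p_linear_l HLR yN)) addr0.
Qed.

End Completeness.

Theorem mainTheorem12 (K : fieldType) (V : vectType K)
    (br p : V -> V -> V) (Ginf N : {vspace V}) :
  [pchar K] =i pred0 ->
  lie_bracket br ->
  (* g two-step solvable: [g,g] is abelian *)
  (forall x y, x \in lcs br fullv 2 -> y \in lcs br fullv 2 -> br x y = 0) ->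
  (* Ginf = g^infty = intersection of the lower central series of g *)
  (forall v, v \in Ginf <-> (forall i, (0 < i)%N -> v \in lcs br fullv i)) ->
  (* N is a subalgebra complementary to Ginf *)
  (forall x y, x \in N -> y \in N -> br x y \in N) ->
  (Ginf + N = fullv)%VS -> (Ginf :&: N = 0)%VS ->
  (* p is an LR-structure on N with N.N in [N,N] *)
  LR_on br N p ->
  (forall x y, x \in N -> y \in N -> p x y \in lcs br N 2) ->
  (forall i j : nat, (0 < i)%N -> (0 < j)%N -> forall x y,
      x \in lcs br N i -> y \in lcs br N j -> p x y \in lcs br N (i + j))
  /\
  (forall star : V -> V -> V,
      (forall a b x y, a \in Ginf -> b \in Ginf -> x \in N -> y \in N ->
         star (a + x) (b + y) = br x b + p x y) ->
      complete_product star).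
Proof.
move=> _ Hbr _ HG HN Hsum Hcap HLR HNN; split.
  by move=> i j i0 j0 x y; apply: (p_lcs Hbr HN HLR HNN).
by move=> star Hstar; apply: (star_complete Hbr HN HLR HNN HG Hsum Hcap Hstar).
Qed.
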